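(* Let $X$ be a Dedekind complete Riesz space with weak order unit $e$ and $T$ a conditional expectation with $Te=e$. For a net $(x_{\alpha})_{\alpha\in A}$ in $X$ and $x\in X$, the following are equivalent: (i) $x_{\alpha}\to x$ in $T$-conditional probability; (ii) $T(|x_{\alpha}-x|\wedge u)\xrightarrow{o}0$ for every $u\in X_{+}$; (iii) $T(|x_{\alpha}-x|\wedge e)\xrightarrow{o}0$.
   Context: A conditional expectation operator on $X$ is a strictly positive, order continuous linear projection $T$ with $Te=e$ whose range is a Dedekind complete Riesz subspace. $\xrightarrow{o}$ denotes order convergence: $y_\alpha\xrightarrow{o}y$ if there is a net $z_\beta\downarrow0$ such that for every $\beta$ there is $\alpha_0$ with $|y_\alpha-y|\le z_\beta$ for all $\alpha\ge\alpha_0$. $x_\alpha\to x$ in $T$-conditional probability means $TP_{(|x_\alpha-x|-\epsilon e)^{+}}e\xrightarrow{o}0$ for every $\epsilon>0$, where $P_y$ is the band projection onto the band generated by $y$. *)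

From Stdlib Require Import Reals ClassicalEpsilon.
Open Scope R_scope.

Record riesz := RieszSpace {
  car :> Type;
  rzero : car;
  radd : car -> car -> car;
  ropp : car -> car;
  rscal : R -> car -> car;
  rle : car -> car -> Prop;
  rsup : car -> car -> car;
  rinf : car -> car -> car;
  raddA : forall x y z, radd x (radd y z) = radd (radd x y) z;
  raddC : forall x y, radd x y = radd y x;
  radd0 : forall x, radd x rzero = x;
  raddN : forall x, radd x (ropp x) = rzero;
  rscalA : forall a b x, rscal a (rscal b x) = rscal (a * b) x;
  rscal1 : forall x, rscal 1 x = x;
  rscalDr : forall a x y, rscal a (radd x y) = radd (rscal a x) (rscal a y);
  rscalDl : forall a b x, rscal (a + b) x = radd (rscal a x) (rscal b x);
  rle_refl : forall x, rle x x;
  rle_trans : forall x y z, rle x y -> rle y z -> rle x z;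
  rle_anti : forall x y, rle x y -> rle y x -> x = y;
  rle_add : forall x y z, rle x y -> rle (radd x z) (radd y z);
  rle_scal : forall a x y, 0 <= a -> rle x y -> rle (rscal a x) (rscal a y);
  rsup_ub1 : forall x y, rle x (rsup x y);
  rsup_ub2 : forall x y, rle y (rsup x y);
  rsup_lub : forall x y z, rle x z -> rle y z -> rle (rsup x y) z;
  rinf_lb1 : forall x y, rle (rinf x y) x;
  rinf_lb2 : forall x y, rle (rinf x y) y;
  rinf_glb : forall x y z, rle z x -> rle z y -> rle z (rinf x y)
}.

Arguments rzero {r}.

Section RieszDefs.
Variable X : riesz.

Definition rsub (x y : X) : X := radd X x (ropp X y).
Definition rpos (x : X) : X := rsup X x rzero.
Definition rabs (x : X) : X := rsup X x (ropp X x).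

Definition is_sup (S : X -> Prop) (s : X) : Prop :=
  (forall y, S y -> rle X y s) /\ (forall u, (forall y, S y -> rle X y u) -> rle X s u).
Definition is_inf (S : X -> Prop) (s : X) : Prop :=
  (forall y, S y -> rle X s y) /\ (forall u, (forall y, S y -> rle X u y) -> rle X u s).

Definition dedekind_complete : Prop :=
  forall S : X -> Prop, (exists x, S x) -> (exists u, forall y, S y -> rle X y u) ->
  exists s, is_sup S s.

Definition subspace (V : X -> Prop) : Prop :=
  V rzero /\ (forall x y, V x -> V y -> V (radd X x y)) /\
  (forall a x, V x -> V (rscal X a x)).

Definition ideal (I : X -> Prop) : Prop :=
  subspace I /\ (forall x y, I x -> rle X (rabs y) (rabs x) -> I y).
Definition band (B : X -> Prop) : Prop :=
  ideal B /\ (forall (S : X -> Prop) s, (forall y, S y -> B y) -> is_sup S s -> B s).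

Definition band_gen (y : X) : X -> Prop :=
  fun z => forall B, band B -> B y -> B z.

Definition disjoint (x y : X) : Prop := rinf X (rabs x) (rabs y) = rzero.
Definition dcompl (B : X -> Prop) : X -> Prop := fun x => forall b, B b -> disjoint x b.

Definition weak_unit (e : X) : Prop := rle X rzero e /\ forall x, band_gen e x.

(* band projection onto B: P x is the component in B of the decomposition
   x = p + (x - p), p in B, x - p in B^d (exists and is unique for projection bands) *)
Definition band_proj (B : X -> Prop) (x : X) : X :=
  epsilon (inhabits (@rzero X)) (fun p => B p /\ dcompl B (rsub x p)).

Definition P (y : X) : X -> X := band_proj (band_gen y).

End RieszDefs.

Arguments rsub {X}. Arguments rpos {X}. Arguments rabs {X}.
Arguments is_sup {X}. Arguments is_inf {X}. Arguments P {X}.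

Record directed := Directed {
  dcar :> Type;
  dle : dcar -> dcar -> Prop;
  dle_refl : forall a, dle a a;
  dle_trans : forall a b c, dle a b -> dle b c -> dle a c;
  dinh : inhabited dcar;
  dup : forall a b, exists c, dle a c /\ dle b c
}.

Section Nets.
Variable X : riesz.

Definition decr_to_zero (B : directed) (z : B -> X) : Prop :=
  (forall b b', dle B b b' -> rle X (z b') (z b)) /\
  is_inf (fun w => exists b, w = z b) rzero.

Definition oconv (A : directed) (y : A -> X) (l : X) : Prop :=
  exists (B : directed) (z : B -> X), decr_to_zero B z /\
    forall b, exists a0, forall a, dle A a0 a -> rle X (rabs (rsub (y a) l)) (z b).

Definition range (T : X -> X) : X -> Prop := fun y => exists x, y = T x.

Definition riesz_subspace (V : X -> Prop) : Prop :=
  subspace X V /\ (forall x y, V x -> V y -> V (rsup X x y)) /\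
  (forall x y, V x -> V y -> V (rinf X x y)).

Definition dedekind_complete_in (V : X -> Prop) : Prop :=
  forall S : X -> Prop, (forall y, S y -> V y) -> (exists x, S x) ->
  (exists u, V u /\ forall y, S y -> rle X y u) ->
  exists s, V s /\ (forall y, S y -> rle X y s) /\
            (forall u, V u -> (forall y, S y -> rle X y u) -> rle X s u).

Definition linear_op (T : X -> X) : Prop :=
  (forall x y, T (radd X x y) = radd X (T x) (T y)) /\
  (forall a x, T (rscal X a x) = rscal X a (T x)).

Definition strictly_positive (T : X -> X) : Prop :=
  (forall x, rle X rzero x -> rle X rzero (T x)) /\
  (forall x, rle X rzero x -> x <> rzero -> T x <> rzero).

Definition order_continuous (T : X -> X) : Prop :=
  forall (A : directed) (y : A -> X), oconv A y rzero -> oconv A (fun a => T (y a)) rzero.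

Definition cond_exp (T : X -> X) (e : X) : Prop :=
  linear_op T /\ strictly_positive T /\ order_continuous T /\
  (forall x, T (T x) = T x) /\ T e = e /\
  riesz_subspace (range T) /\ dedekind_complete_in (range T).

Definition cp_conv (T : X -> X) (e : X) (A : directed) (x : A -> X) (l : X) : Prop :=
  forall eps, 0 < eps ->
    oconv A (fun a => T (P (rpos (rsub (rabs (rsub (x a) l)) (rscal X eps e))) e)) rzero.

End Nets.

Arguments oconv {X}. Arguments cond_exp {X}. Arguments cp_conv {X}.
Arguments dedekind_complete : clear implicits.

(* Write y := |x_a ⊖ l| and p := P_{(y ⊖ ε e)⁺} e. The component p lies in the band of
   (y ⊖ ε e)⁺, which is disjoint from (y ⊖ ε e)⁻; hence ε p ≼ y and, as p ≼ e,
   min(ε, 1) p ≼ y ⊓ e, so (iii) gives (i) by domination. Conversely e ⊖ p is disjoint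
   from that band, which yields  y ⊓ u ≼ n p ⊕ (u ⊖ n e)⁺ ⊕ ε e  for every n. After applying
   T the first term tends to 0 by (i), while T (u ⊖ n e)⁺ ⊕ ε T e has infimum 0 over n and ε,
   because (u ⊖ n e)⁺ ↓ 0 when e is a weak unit and T is order continuous; this gives (ii). *)

From Stdlib Require Import Reals Lra Lia ClassicalEpsilon.
Open Scope R_scope.

Arguments raddA {r}.
Arguments raddC {r}.
Arguments radd0 {r}.
Arguments raddN {r}.
Arguments rscalA {r}.
Arguments rscal1 {r}.
Arguments rscalDr {r}.
Arguments rscalDl {r}.
Arguments rle_refl {r}.
Arguments rle_trans {r}.
Arguments rle_anti {r}.
Arguments rle_add {r}.
Arguments rle_scal {r}.
Arguments rsup_ub1 {r}.
Arguments rsup_ub2 {r}.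
Arguments rsup_lub {r}.
Arguments rinf_lb1 {r}.
Arguments rinf_lb2 {r}.
Arguments rinf_glb {r}.

Notation "0ᵣ" := (@rzero _).
Notation opp := (ropp _).
Notation "x ⊕ y" := (radd _ x y) (at level 50, left associativity).
Notation "x ⊖ y" := (rsub x y) (at level 50, left associativity).
Notation "a ⊙ x" := (rscal _ a x) (at level 40).
Notation "x ≼ y" := (rle _ x y) (at level 70).
Notation "x ⊔ y" := (rsup _ x y) (at level 45, left associativity).
Notation "x ⊓ y" := (rinf _ x y) (at level 45, left associativity).
Notation "x ⊥ y" := (disjoint _ x y) (at level 70).

(** * Vector lattice arithmetic *)

Section VectorLattice.
Context {X : riesz}.
Implicit Types (x y z w c : X).

Lemma add0r x : 0ᵣ ⊕ x = x.
Proof. rewrite raddC; apply radd0. Qed.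
Lemma addNr x : opp x ⊕ x = 0ᵣ.
Proof. rewrite raddC; apply raddN. Qed.
Lemma addrK x y : x ⊕ y ⊖ y = x.
Proof. unfold rsub. rewrite <- raddA, raddN; apply radd0. Qed.
Lemma subrK x y : x ⊖ y ⊕ y = x.
Proof. unfold rsub. rewrite <- raddA, addNr; apply radd0. Qed.
Lemma addIr x y z : x ⊕ z = y ⊕ z -> x = y.
Proof. intro H. rewrite <- (addrK x z), <- (addrK y z), H. reflexivity. Qed.
Lemma addrI x y z : z ⊕ x = z ⊕ y -> x = y.
Proof. rewrite (raddC z x), (raddC z y). apply addIr. Qed.
Lemma oppr_unique x y : x ⊕ y = 0ᵣ -> y = opp x.
Proof. intro H. apply (addrI _ _ x). rewrite H, raddN. reflexivity. Qed.
Lemma opprK x : opp (opp x) = x.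
Proof. symmetry. apply oppr_unique, addNr. Qed.
Lemma oppr0 : opp 0ᵣ = (0ᵣ : X).
Proof. symmetry; apply oppr_unique, radd0. Qed.
Lemma opprD x y : opp (x ⊕ y) = opp x ⊕ opp y.
Proof.
  symmetry. apply oppr_unique.
  rewrite (raddC (opp x)), raddA, <- (raddA x y), raddN, radd0, raddN. reflexivity.
Qed.
Lemma opprB x y : opp (x ⊖ y) = y ⊖ x.
Proof. unfold rsub. rewrite opprD, opprK, raddC. reflexivity. Qed.
Lemma subr0 x : x ⊖ 0ᵣ = x.
Proof. unfold rsub. rewrite oppr0. apply radd0. Qed.
Lemma subrDr x y z : x ⊕ z ⊖ (y ⊕ z) = x ⊖ y.
Proof.
  unfold rsub. rewrite opprD, (raddC (opp y)), raddA, <- (raddA x z), raddN, radd0.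
  reflexivity.
Qed.

Lemma scale0r x : 0 ⊙ x = 0ᵣ.
Proof. apply (addIr _ _ (0 ⊙ x)). rewrite add0r, <- rscalDl. f_equal; ring. Qed.
Lemma scaler0 a : a ⊙ 0ᵣ = (0ᵣ : X).
Proof. apply (addIr _ _ (a ⊙ 0ᵣ)). rewrite add0r, <- rscalDr, radd0. reflexivity. Qed.
Lemma scaleN1r x : (-1) ⊙ x = opp x.
Proof.
  apply oppr_unique. rewrite <- (rscal1 x) at 1. rewrite <- rscalDl.
  replace (1 + -1) with 0 by ring. apply scale0r.
Qed.
Lemma scaleNr a x : (- a) ⊙ x = opp (a ⊙ x).
Proof. rewrite <- scaleN1r, rscalA. f_equal; ring. Qed.
Lemma scalerN a x : a ⊙ opp x = opp (a ⊙ x).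
Proof. rewrite <- !scaleN1r, !rscalA. f_equal; ring. Qed.
Lemma scalerBr a x y : a ⊙ (x ⊖ y) = a ⊙ x ⊖ a ⊙ y.
Proof. unfold rsub. rewrite rscalDr, scalerN. reflexivity. Qed.
Lemma scaleKr a x : a <> 0 -> / a ⊙ (a ⊙ x) = x.
Proof. intro Ha. rewrite rscalA, Rinv_l by exact Ha. apply rscal1. Qed.
Lemma scalerK a x : a <> 0 -> a ⊙ (/ a ⊙ x) = x.
Proof. intro Ha. rewrite rscalA, Rinv_r by exact Ha. apply rscal1. Qed.

Lemma ler_add2r x y z : x ⊕ z ≼ y ⊕ z <-> x ≼ y.
Proof.
  split; [|apply rle_add]. intro H.
  rewrite <- (addrK x z), <- (addrK y z). apply rle_add, H.
Qed.
Lemma ler_add2l x y z : z ⊕ x ≼ z ⊕ y <-> x ≼ y.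
Proof. rewrite (raddC z x), (raddC z y). apply ler_add2r. Qed.
Lemma lerD x y z w : x ≼ y -> z ≼ w -> x ⊕ z ≼ y ⊕ w.
Proof.
  intros H1 H2. apply rle_trans with (y ⊕ z); [apply ler_add2r | apply ler_add2l]; assumption.
Qed.
Lemma ler_subl_addr x y z : x ⊖ z ≼ y <-> x ≼ y ⊕ z.
Proof. rewrite <- (ler_add2r _ _ z), subrK. reflexivity. Qed.
Lemma ler_subr_addr x y z : x ≼ y ⊖ z <-> x ⊕ z ≼ y.
Proof. rewrite <- (ler_add2r _ _ z), subrK. reflexivity. Qed.
Lemma subr_ge0 x y : 0ᵣ ≼ y ⊖ x <-> x ≼ y.
Proof. rewrite ler_subr_addr, add0r. reflexivity. Qed.
Lemma subr_le0 x y : x ⊖ y ≼ 0ᵣ <-> x ≼ y.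
Proof. rewrite ler_subl_addr, add0r. reflexivity. Qed.
Lemma lerN2 x y : opp x ≼ opp y <-> y ≼ x.
Proof.
  rewrite <- (ler_add2r _ _ (x ⊕ y)), raddA, addNr, add0r.
  rewrite (raddC x y), raddA, addNr, add0r. reflexivity.
Qed.
Lemma oppr_le0 x : 0ᵣ ≼ x -> opp x ≼ 0ᵣ.
Proof. intro H. rewrite <- oppr0. apply lerN2, H. Qed.
Lemma ler_subr x y z : y ≼ z -> x ⊖ z ≼ x ⊖ y.
Proof. intro H. apply ler_add2l, lerN2, H. Qed.
Lemma ler_addr x y : 0ᵣ ≼ y -> x ≼ x ⊕ y.
Proof. intro H. rewrite <- (radd0 x) at 1. apply ler_add2l, H. Qed.
Lemma ler_subr_self x y : x ≼ x ⊖ y <-> y ≼ 0ᵣ.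
Proof. rewrite ler_subr_addr, <- (ler_add2l y 0ᵣ x), radd0. reflexivity. Qed.
Lemma ler_subl x y : 0ᵣ ≼ y -> x ⊖ y ≼ x.
Proof. intro H. apply ler_subl_addr, ler_addr, H. Qed.
Lemma addr_ge0 x y : 0ᵣ ≼ x -> 0ᵣ ≼ y -> 0ᵣ ≼ x ⊕ y.
Proof. intros. rewrite <- (radd0 0ᵣ). apply lerD; assumption. Qed.

Lemma scaler_ge0 a x : 0 <= a -> 0ᵣ ≼ x -> 0ᵣ ≼ a ⊙ x.
Proof. intros. rewrite <- (scaler0 a). apply rle_scal; assumption. Qed.
Lemma ler_scale2r a b x : a <= b -> 0ᵣ ≼ x -> a ⊙ x ≼ b ⊙ x.
Proof.
  intros Hab Hx. apply subr_ge0. unfold rsub.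
  rewrite <- scaleNr, <- rscalDl. apply scaler_ge0; [lra | exact Hx].
Qed.
Lemma ler_pscale2l a x y : 0 < a -> a ⊙ x ≼ a ⊙ y <-> x ≼ y.
Proof.
  intro Ha. split; [|apply rle_scal; lra]. intro H.
  rewrite <- (scaleKr a x), <- (scaleKr a y) by lra.
  apply rle_scal; [left; apply Rinv_0_lt_compat, Ha | exact H].
Qed.

Lemma supC x y : x ⊔ y = y ⊔ x.
Proof. apply rle_anti; apply rsup_lub; auto using rsup_ub1, rsup_ub2. Qed.
Lemma infC x y : x ⊓ y = y ⊓ x.
Proof. apply rle_anti; apply rinf_glb; auto using rinf_lb1, rinf_lb2. Qed.
Lemma sup_l x y : y ≼ x -> x ⊔ y = x.
Proof. intro. apply rle_anti; [apply rsup_lub; auto using rle_refl | apply rsup_ub1]. Qed.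
Lemma inf_l x y : x ≼ y -> x ⊓ y = x.
Proof. intro. apply rle_anti; [apply rinf_lb1 | apply rinf_glb; auto using rle_refl]. Qed.
Lemma le_inf2 x y x' y' : x ≼ x' -> y ≼ y' -> x ⊓ y ≼ x' ⊓ y'.
Proof.
  intros. apply rinf_glb.
  - apply rle_trans with x; [apply rinf_lb1 | assumption].
  - apply rle_trans with y; [apply rinf_lb2 | assumption].
Qed.
Lemma le_sup2 x y x' y' : x ≼ x' -> y ≼ y' -> x ⊔ y ≼ x' ⊔ y'.
Proof.
  intros. apply rsup_lub.
  - apply rle_trans with x'; [assumption | apply rsup_ub1].
  - apply rle_trans with y'; [assumption | apply rsup_ub2].
Qed.
Lemma supDr x y z : (x ⊔ y) ⊕ z = (x ⊕ z) ⊔ (y ⊕ z).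
Proof.
  apply rle_anti.
  - apply ler_subr_addr, rsup_lub; apply ler_subr_addr; auto using rsup_ub1, rsup_ub2.
  - apply rsup_lub; apply rle_add; auto using rsup_ub1, rsup_ub2.
Qed.
Lemma infDr x y z : (x ⊓ y) ⊕ z = (x ⊕ z) ⊓ (y ⊕ z).
Proof.
  apply rle_anti.
  - apply rinf_glb; apply rle_add; auto using rinf_lb1, rinf_lb2.
  - apply ler_subl_addr, rinf_glb; apply ler_subl_addr; auto using rinf_lb1, rinf_lb2.
Qed.
Lemma infDl x y z : z ⊕ (x ⊓ y) = (z ⊕ x) ⊓ (z ⊕ y).
Proof. rewrite raddC, infDr, (raddC x), (raddC y). reflexivity. Qed.
Lemma opp_sup x y : opp (x ⊔ y) = opp x ⊓ opp y.
Proof.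
  apply rle_anti.
  - apply rinf_glb; apply lerN2; auto using rsup_ub1, rsup_ub2.
  - apply lerN2. rewrite opprK.
    apply rsup_lub; apply lerN2; rewrite opprK; auto using rinf_lb1, rinf_lb2.
Qed.
Lemma sup_inf_add x y : x ⊔ y ⊕ x ⊓ y = x ⊕ y.
Proof.
  apply (addrI _ _ (opp (x ⊔ y))). rewrite raddA, addNr, add0r, opp_sup, infDr.
  rewrite raddA, addNr, add0r, (raddC x y), raddA, addNr, add0r. apply infC.
Qed.
Lemma inf_eq_sub x y : x ⊓ y = x ⊕ y ⊖ x ⊔ y.
Proof. rewrite <- sup_inf_add, raddC. symmetry. apply addrK. Qed.
Lemma inf_ge0 x y : 0ᵣ ≼ x -> 0ᵣ ≼ y -> 0ᵣ ≼ x ⊓ y.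
Proof. intros; apply rinf_glb; assumption. Qed.
Lemma le0_of_inf0 z x y : z ≼ x -> z ≼ y -> x ⊓ y = 0ᵣ -> z ≼ 0ᵣ.
Proof. intros H1 H2 H3. rewrite <- H3. apply rinf_glb; assumption. Qed.
Lemma inf_add_le x y z : 0ᵣ ≼ x -> 0ᵣ ≼ y -> 0ᵣ ≼ z -> (x ⊕ y) ⊓ z ≼ x ⊓ z ⊕ y ⊓ z.
Proof.
  intros Hx Hy Hz. rewrite infDr, !infDl.
  assert (H : (x ⊕ y) ⊓ z ≼ z) by apply rinf_lb2.
  apply rinf_glb; apply rinf_glb; [apply rinf_lb1 | ..]; eapply rle_trans; try exact H.
  - rewrite raddC. apply ler_addr, Hx.
  - apply ler_addr, Hy.
  - apply ler_addr, Hz.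
Qed.

Lemma pos_ge0 x : 0ᵣ ≼ rpos x.
Proof. apply rsup_ub2. Qed.
Lemma le_pos x : x ≼ rpos x.
Proof. apply rsup_ub1. Qed.
Lemma le_abs x : x ≼ rabs x.
Proof. apply rsup_ub1. Qed.
Lemma oppr_le_abs x : opp x ≼ rabs x.
Proof. apply rsup_ub2. Qed.
Lemma abs_ge0 x : 0ᵣ ≼ rabs x.
Proof.
  apply (ler_pscale2l 2); [lra|]. rewrite scaler0.
  replace 2 with (1 + 1) by ring. rewrite rscalDl, rscal1, <- (raddN x).
  apply lerD; [apply le_abs | apply oppr_le_abs].
Qed.
Lemma abs_id x : 0ᵣ ≼ x -> rabs x = x.
Proof. intro H. apply sup_l. eapply rle_trans; [apply oppr_le0, H | exact H]. Qed.
Lemma abs0 : rabs (0ᵣ : X) = 0ᵣ.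
Proof. apply abs_id, rle_refl. Qed.
Lemma abs_add_le x y : rabs (x ⊕ y) ≼ rabs x ⊕ rabs y.
Proof.
  apply rsup_lub; [|rewrite opprD]; apply lerD; auto using le_abs, oppr_le_abs.
Qed.
Lemma abs_scale_le a x : rabs (a ⊙ x) ≼ Rabs a ⊙ rabs x.
Proof.
  destruct (Rle_lt_dec 0 a) as [Ha|Ha].
  - rewrite Rabs_right by lra. apply rsup_lub; [|rewrite <- scalerN];
      apply rle_scal; auto using le_abs, oppr_le_abs.
  - rewrite Rabs_left by lra. apply rsup_lub.
    + replace (a ⊙ x) with ((- a) ⊙ opp x) by (rewrite scalerN, scaleNr, opprK; reflexivity).
      apply rle_scal; [lra | apply oppr_le_abs].
    + rewrite <- scaleNr. apply rle_scal; [lra | apply le_abs].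
Qed.
Lemma pos_subr x : rpos x ⊖ x = rpos (opp x).
Proof. unfold rsub, rpos. rewrite supDr, raddN, add0r, supC. reflexivity. Qed.
Lemma pos_opp_inf0 x : rpos x ⊓ rpos (opp x) = 0ᵣ.
Proof.
  rewrite <- pos_subr. unfold rsub.
  rewrite <- (radd0 (rpos x)) at 1. rewrite <- infDl.
  replace (0ᵣ ⊓ opp x) with (opp (rpos x))
    by (unfold rpos; rewrite opp_sup, oppr0, infC; reflexivity).
  apply raddN.
Qed.
Lemma sup_pos_l x c : 0ᵣ ≼ c -> rpos x ⊔ c = x ⊔ c.
Proof.
  intro Hc. unfold rpos. apply rle_anti.
  - apply rsup_lub; [apply rsup_lub|]; auto using rsup_ub1, rsup_ub2.
    eapply rle_trans; [exact Hc | apply rsup_ub2].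
  - apply le_sup2; auto using rle_refl, rsup_ub1.
Qed.

Lemma inf0_scale_nat x y n : 0ᵣ ≼ x -> 0ᵣ ≼ y -> x ⊓ y = 0ᵣ -> (INR n ⊙ x) ⊓ y = 0ᵣ.
Proof.
  intros Hx Hy H. induction n as [|n IH].
  - simpl. rewrite scale0r. apply inf_l, Hy.
  - assert (Hn : 0ᵣ ≼ INR n ⊙ x) by (apply scaler_ge0; auto using pos_INR).
    rewrite S_INR, rscalDl, rscal1. apply rle_anti.
    + rewrite <- (radd0 0ᵣ), <- IH, <- H at 1. apply inf_add_le; assumption.
    + apply inf_ge0; [apply addr_ge0|]; assumption.
Qed.
Lemma inf0_scale x y a : 0 <= a -> 0ᵣ ≼ x -> 0ᵣ ≼ y -> x ⊓ y = 0ᵣ -> (a ⊙ x) ⊓ y = 0ᵣ.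
Proof.
  intros Ha Hx Hy H. destruct (INR_unbounded a) as [n Hn]. apply rle_anti.
  - rewrite <- (inf0_scale_nat x y n) by assumption.
    apply le_inf2; [apply ler_scale2r; [lra | exact Hx] | apply rle_refl].
  - apply inf_ge0; [apply scaler_ge0|]; assumption.
Qed.

Lemma disjoint_sym x y : x ⊥ y -> y ⊥ x.
Proof. unfold disjoint. rewrite infC. auto. Qed.
Lemma disjoint_ge0 x y : 0ᵣ ≼ x -> 0ᵣ ≼ y -> x ⊥ y <-> x ⊓ y = 0ᵣ.
Proof. intros Hx Hy. unfold disjoint. rewrite !abs_id by assumption. reflexivity. Qed.

End VectorLattice.

(** * Disjoint complements are bands *)

Section DisjointComplement.
Context {X : riesz}.
Implicit Types (y w c d s p q : X).

Lemma disjoint_ideal d : ideal X (fun b => b ⊥ d).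
Proof.
  unfold disjoint. assert (Hd := abs_ge0 d).
  split; [split; [|split]|].
  - rewrite abs0. apply inf_l, Hd.
  - intros b1 b2 H1 H2. apply rle_anti; [|apply inf_ge0; auto using abs_ge0].
    apply rle_trans with ((rabs b1 ⊕ rabs b2) ⊓ rabs d).
    + apply le_inf2; [apply abs_add_le | apply rle_refl].
    + rewrite <- (radd0 0ᵣ), <- H1 at 1. rewrite <- H2. apply inf_add_le; auto using abs_ge0.
  - intros a b H. apply rle_anti; [|apply inf_ge0; auto using abs_ge0].
    apply rle_trans with ((Rabs a ⊙ rabs b) ⊓ rabs d).
    + apply le_inf2; [apply abs_scale_le | apply rle_refl].
    + rewrite inf0_scale; auto using abs_ge0, rle_refl, Rabs_pos.
  - intros b y H Hy. apply rle_anti; [|apply inf_ge0; auto using abs_ge0].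
    rewrite <- H. apply le_inf2; auto using rle_refl.
Qed.

(* Since y ⊕ c = y ⊔ c ⊕ y ⊓ c ≼ s ⊔ c for y in S, we get s ⊕ c ≼ s ⊔ c, whence
   s⁺ ⊓ c = s⁺ ⊕ c ⊖ s ⊔ c ≼ s⁻, and s⁺ ⊥ s⁻. *)
Lemma sup_pos_inf0 (S : X -> Prop) s c : 0ᵣ ≼ c ->
  (forall y, S y -> y ⊓ c ≼ 0ᵣ) -> is_sup S s -> rpos s ⊓ c = 0ᵣ.
Proof.
  intros Hc HS [Hs1 Hs].
  assert (Hsc : s ⊕ c ≼ s ⊔ c).
  { apply ler_subr_addr, Hs. intros y Hy. apply ler_subr_addr.
    rewrite <- sup_inf_add. rewrite <- (radd0 (s ⊔ c)).
    apply lerD; [apply le_sup2; [apply Hs1, Hy | apply rle_refl] | apply HS, Hy]. }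
  apply rle_anti; [|apply inf_ge0; auto using pos_ge0].
  apply le0_of_inf0 with (rpos s) (rpos (opp s)); [apply rinf_lb1 | | apply pos_opp_inf0].
  rewrite inf_eq_sub, sup_pos_l, <- pos_subr, <- (subrDr (rpos s) s c) by exact Hc.
  apply ler_subr, Hsc.
Qed.

Lemma disjoint_sup_closed d (S : X -> Prop) s :
  (forall y, S y -> y ⊥ d) -> is_sup S s -> s ⊥ d.
Proof.
  unfold disjoint. intros HS Hsup. set (c := rabs d).
  assert (Hc : 0ᵣ ≼ c) by apply abs_ge0.
  destruct (classic (exists y, S y)) as [[y0 Hy0] | Hempty].
  - assert (Hpos : rpos s ⊓ c = 0ᵣ).
    { apply (sup_pos_inf0 S); [exact Hc | | exact Hsup]. intros y Hy.
      rewrite <- (HS y Hy). apply le_inf2; [apply le_abs | apply rle_refl]. }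
    assert (Hneg : rpos (opp s) ⊓ c = 0ᵣ).
    { apply rle_anti; [|apply inf_ge0; auto using pos_ge0].
      rewrite <- (HS y0 Hy0). apply le_inf2; [|apply rle_refl].
      apply rsup_lub; [|apply abs_ge0].
      apply rle_trans with (opp y0); [apply lerN2, (proj1 Hsup), Hy0 | apply oppr_le_abs]. }
    assert (Habs : rabs s ≼ rpos s ⊕ rpos (opp s)).
    { apply rsup_lub; eapply rle_trans; try apply le_pos.
      - apply ler_addr, pos_ge0.
      - rewrite raddC. apply ler_addr, pos_ge0. }
    apply rle_anti; [|apply inf_ge0; auto using abs_ge0].
    apply rle_trans with ((rpos s ⊕ rpos (opp s)) ⊓ c).
    + apply le_inf2; [exact Habs | apply rle_refl].
    + rewrite <- (radd0 0ᵣ), <- Hpos at 1. rewrite <- Hneg.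
      apply inf_add_le; auto using pos_ge0.
  - assert (Hs : s ≼ s ⊖ c).
    { apply (proj2 Hsup). intros y Hy. exfalso. apply Hempty. exists y; exact Hy. }
    assert (Hc0 : c = 0ᵣ) by (apply rle_anti; [apply (ler_subr_self s), Hs | exact Hc]).
    rewrite Hc0, infC. apply inf_l, abs_ge0.
Qed.

Lemma disjoint_band d : band X (fun b => b ⊥ d).
Proof.
  split; [apply disjoint_ideal|]. intros S s HS Hsup. apply (disjoint_sup_closed d S s HS Hsup).
Qed.

Lemma band_gen_self w : band_gen X w w.
Proof. intros B _ H; exact H. Qed.

Lemma band_gen_disjoint w d b : w ⊥ d -> band_gen X w b -> b ⊥ d.
Proof. intros Hwd Hb. exact (Hb _ (disjoint_band d) Hwd). Qed.

Lemma band_gen_subr_scale w p q a :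
  band_gen X w p -> band_gen X w q -> band_gen X w (p ⊖ a ⊙ q).
Proof.
  intros Hp Hq B HB HBw.
  pose proof (Hp B HB HBw) as HBp. pose proof (Hq B HB HBw) as HBq.
  destruct HB as [[[_ [Hadd Hscale]] _] _].
  unfold rsub. rewrite <- scaleN1r, rscalA. apply Hadd; [exact HBp | apply Hscale, HBq].
Qed.

End DisjointComplement.

(** * Dedekind complete spaces *)

Definition nat_directed : directed.
Proof.
  refine (@Directed nat le _ _ _ _).
  - apply Nat.le_refl.
  - apply Nat.le_trans.
  - exact (inhabits 0%nat).
  - intros a b. exists (Nat.max a b). split; [apply Nat.le_max_l | apply Nat.le_max_r].
Defined.

Section DedekindComplete.
Context {X : riesz}.
Hypothesis HX : dedekind_complete X.
Implicit Types (x y w u v e p t : X).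

Lemma archimedean t u : (forall n, INR n ⊙ t ≼ u) -> t ≼ 0ᵣ.
Proof.
  intro H. destruct (HX (fun y => exists n, y = INR n ⊙ t)) as [s [Hs1 Hs2]].
  - exists (INR 0 ⊙ t), 0%nat. reflexivity.
  - exists u. intros y [n ->]. apply H.
  - assert (Hs : s ≼ s ⊖ t).
    { apply Hs2. intros y [n ->]. apply ler_subr_addr.
      rewrite <- (rscal1 t) at 2. rewrite <- rscalDl, <- S_INR.
      apply Hs1. exists (S n). reflexivity. }
    apply (ler_subr_self s), Hs.
Qed.

Lemma is_inf_pos_scale0 (t : X) : 0ᵣ ≼ t -> is_inf (fun w => exists eps, 0 < eps /\ w = eps ⊙ t) 0ᵣ.
Proof.
  intro Ht. split.
  - intros w [eps [Heps ->]]. apply scaler_ge0; [lra | exact Ht].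
  - intros v Hv. apply (archimedean v t). intros [|k].
    + simpl. rewrite scale0r. exact Ht.
    + assert (Hk : 0 < INR (S k)) by (apply lt_0_INR; lia).
      rewrite <- (scalerK (INR (S k)) t) by lra. apply rle_scal; [lra|].
      apply Hv. exists (/ INR (S k)). split; [apply Rinv_0_lt_compat, Hk | reflexivity].
Qed.

(* The component of x in the band generated by w is sup_n (x ⊓ n w). *)
Lemma band_component_exists w x : 0ᵣ ≼ w -> 0ᵣ ≼ x ->
  exists p, band_gen X w p /\ dcompl X (band_gen X w) (x ⊖ p).
Proof.
  intros Hw Hx. set (Approx := fun y => exists n, y = x ⊓ (INR n ⊙ w)).
  assert (Hnw : forall n, 0ᵣ ≼ INR n ⊙ w) by (intro; apply scaler_ge0; auto using pos_INR).
  destruct (HX Approx) as [p [Hp1 Hp2]].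
  - exists (x ⊓ (INR 0 ⊙ w)), 0%nat. reflexivity.
  - exists x. intros y [n ->]. apply rinf_lb1.
  - exists p. split.
    + intros B HB HBw. apply (proj2 HB) with Approx; [|split; assumption].
      intros y [n ->]. destruct HB as [[[_ [_ Hscale]] Hsolid] _].
      apply Hsolid with (INR n ⊙ w); [apply Hscale, HBw|].
      rewrite (abs_id (INR n ⊙ w)), (abs_id (x ⊓ _)) by auto using inf_ge0.
      apply rinf_lb2.
    + assert (Hpx : p ≼ x) by (apply Hp2; intros y [n ->]; apply rinf_lb1).
      assert (Hxp : 0ᵣ ≼ x ⊖ p) by (apply subr_ge0, Hpx).
      intros b Hb. apply disjoint_sym, (band_gen_disjoint w); [|exact Hb].
      apply disjoint_ge0; [exact Hw | exact Hxp |].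
      set (v := w ⊓ (x ⊖ p)).
      assert (Hv : forall n, x ⊓ (INR n ⊙ w) ⊕ v ≼ p).
      { intro n. apply rle_trans with (x ⊓ (INR (S n) ⊙ w));
          [|apply Hp1; exists (S n); reflexivity].
        apply rinf_glb.
        - rewrite <- (subrK x p) at 2. rewrite (raddC (x ⊖ p)).
          apply lerD; [apply Hp1; exists n; reflexivity | apply rinf_lb2].
        - rewrite S_INR, rscalDl, rscal1. apply lerD; [apply rinf_lb2 | apply rinf_lb1]. }
      assert (Hpv : p ≼ p ⊖ v) by (apply Hp2; intros y [n ->]; apply ler_subr_addr, Hv).
      apply rle_anti; [apply (ler_subr_self p), Hpv | apply inf_ge0; assumption].
Qed.

Lemma P_spec w x : 0ᵣ ≼ w -> 0ᵣ ≼ x ->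
  band_gen X w (P w x) /\ dcompl X (band_gen X w) (x ⊖ P w x).
Proof.
  intros Hw Hx. unfold P, band_proj. apply epsilon_spec, band_component_exists; assumption.
Qed.

Lemma disjoint_decomp_bounds x p : 0ᵣ ≼ x -> (x ⊖ p) ⊥ p -> 0ᵣ ≼ p /\ p ≼ x.
Proof.
  unfold disjoint. intros Hx H. rewrite infC in H. split.
  - apply lerN2. rewrite oppr0. apply le0_of_inf0 with (rabs p) (rabs (x ⊖ p)); [| |exact H].
    + apply oppr_le_abs.
    + eapply rle_trans; [|apply le_abs]. rewrite <- (add0r (opp p)). apply rle_add, Hx.
  - apply subr_ge0, lerN2. rewrite oppr0.
    apply le0_of_inf0 with (rabs p) (rabs (x ⊖ p)); [| |exact H].
    + eapply rle_trans; [|apply le_abs]. rewrite opprB. apply ler_subl, Hx.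
    + apply oppr_le_abs.
Qed.

Lemma P_bounds w x : 0ᵣ ≼ w -> 0ᵣ ≼ x -> 0ᵣ ≼ P w x /\ P w x ≼ x.
Proof.
  intros Hw Hx. destruct (P_spec w x Hw Hx) as [Hin Hout].
  apply disjoint_decomp_bounds; [exact Hx | apply Hout, Hin].
Qed.

Lemma scale_P_le y e eps : 0ᵣ ≼ y -> 0ᵣ ≼ e -> 0 < eps ->
  eps ⊙ P (rpos (y ⊖ eps ⊙ e)) e ≼ y.
Proof.
  intros Hy He Heps. set (w := rpos (y ⊖ eps ⊙ e)). set (p := P w e).
  set (n := rpos (opp (y ⊖ eps ⊙ e))).
  assert (Hw : 0ᵣ ≼ w) by apply pos_ge0.
  assert (Hn : 0ᵣ ≼ n) by apply pos_ge0.
  destruct (P_bounds w e Hw He) as [Hp Hpe].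
  assert (Hwn : w ⊥ n) by (apply disjoint_ge0; auto; apply pos_opp_inf0).
  assert (Hpn : p ⊓ n = 0ᵣ).
  { apply disjoint_ge0; auto. apply (band_gen_disjoint w); [exact Hwn | apply P_spec; assumption]. }
  apply subr_le0. apply le0_of_inf0 with (eps ⊙ p) n.
  - apply ler_subl, Hy.
  - eapply rle_trans; [|apply le_pos]. rewrite opprB.
    apply rle_add, rle_scal; [lra | exact Hpe].
  - apply inf0_scale; auto; lra.
Qed.

(* y ⊓ u ⊖ eps e ⊖ (u ⊖ n e)⁺ ⊖ n P e is bounded by n (e ⊖ P e) and by |w ⊖ n P e| with
   w = (y ⊖ eps e)⁺; these are disjoint since e ⊖ P e is disjoint from the band of w. *)
Lemma inf_le_P_split y u e eps n : 0ᵣ ≼ y -> 0ᵣ ≼ u -> 0ᵣ ≼ e -> 0 < eps ->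
  y ⊓ u ≼ INR n ⊙ P (rpos (y ⊖ eps ⊙ e)) e ⊕ rpos (u ⊖ INR n ⊙ e) ⊕ eps ⊙ e.
Proof.
  intros Hy Hu He Heps. set (w := rpos (y ⊖ eps ⊙ e)). set (p := P w e).
  set (d := rpos (u ⊖ INR n ⊙ e)). set (m := y ⊓ u).
  assert (Hw : 0ᵣ ≼ w) by apply pos_ge0.
  destruct (P_spec w e Hw He) as [Hin Hout]. fold p in Hin, Hout.
  destruct (P_bounds w e Hw He) as [Hp Hpe]. fold p in Hp, Hpe.
  assert (Hepse : 0ᵣ ≼ eps ⊙ e) by (apply scaler_ge0; [lra | exact He]).
  assert (Hd : 0ᵣ ≼ d) by apply pos_ge0.
  set (z := w ⊖ INR n ⊙ p).
  assert (Hz : (e ⊖ p) ⊓ rabs z = 0ᵣ).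
  { assert (H := Hout z (band_gen_subr_scale w w p (INR n) (band_gen_self w) Hin)).
    unfold disjoint in H. rewrite abs_id in H by (apply subr_ge0, Hpe). exact H. }
  assert (H : m ⊖ eps ⊙ e ⊖ d ⊖ INR n ⊙ p ≼ 0ᵣ).
  { apply le0_of_inf0 with (INR n ⊙ (e ⊖ p)) (rabs z).
    - rewrite scalerBr. apply rle_add.
      apply rle_trans with (m ⊖ d); [apply rle_add, ler_subl, Hepse|].
      apply ler_subl_addr. apply rle_trans with u; [apply rinf_lb2|].
      rewrite raddC. apply ler_subl_addr, le_pos.
    - eapply rle_trans; [|apply le_abs]. apply rle_add.
      eapply rle_trans; [apply ler_subl, Hd|].
      eapply rle_trans; [|apply le_pos]. apply rle_add, rinf_lb1.
    - apply inf0_scale; auto using pos_INR, abs_ge0. apply subr_ge0, Hpe. }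
  do 3 apply (proj1 (ler_subl_addr _ _ _)) in H. rewrite add0r in H. exact H.
Qed.

(* t := v⁺ satisfies n (t ⊓ e) ≼ u for all n, so t ⊓ e = 0, and then t = 0 as e is a
   weak unit. *)
Lemma weak_unit_pos_sub_nat_inf e u v : weak_unit X e -> 0ᵣ ≼ u ->
  (forall n, v ≼ rpos (u ⊖ INR n ⊙ e)) -> v ≼ 0ᵣ.
Proof.
  intros [He Hband] Hu Hv. set (t := rpos v).
  assert (Ht : forall n, t ≼ rpos (u ⊖ INR n ⊙ e)) by (intro n; apply rsup_lub; auto using pos_ge0).
  assert (Ht0 : 0ᵣ ≼ t) by apply pos_ge0.
  assert (Hte0 : 0ᵣ ≼ t ⊓ e) by (apply inf_ge0; assumption).
  assert (Hte : t ⊓ e ≼ 0ᵣ).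
  { apply (archimedean (t ⊓ e) u). intro n. set (q := u ⊖ INR n ⊙ e).
    apply subr_le0. apply le0_of_inf0 with (INR n ⊙ (t ⊓ e)) (rpos (opp q)).
    - apply ler_subl, Hu.
    - eapply rle_trans; [|apply le_pos]. unfold q. rewrite opprB.
      apply rle_add, rle_scal; [apply pos_INR | apply rinf_lb2].
    - apply inf0_scale; auto using pos_INR, pos_ge0.
      apply rle_anti; [|apply inf_ge0; auto using pos_ge0].
      rewrite <- (pos_opp_inf0 q). apply le_inf2; [|apply rle_refl].
      eapply rle_trans; [apply rinf_lb1 | apply Ht]. }
  assert (Het : e ⊥ t).
  { apply disjoint_sym, disjoint_ge0; auto. apply rle_anti; assumption. }
  assert (Htt : t ⊓ t = 0ᵣ) by (apply disjoint_ge0; auto; apply (band_gen_disjoint e); auto).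
  rewrite inf_l in Htt by apply rle_refl.
  rewrite <- Htt. apply le_pos.
Qed.

Lemma weak_unit_pos_sub_nat_decr e u : weak_unit X e -> 0ᵣ ≼ u ->
  decr_to_zero X nat_directed (fun n => rpos (u ⊖ INR n ⊙ e)).
Proof.
  intros Hunit Hu. split; [|split].
  - intros n n' Hn. apply le_sup2; [|apply rle_refl].
    apply ler_subr, ler_scale2r; [apply le_INR, Hn | apply (proj1 Hunit)].
  - intros w [n ->]. apply pos_ge0.
  - intros v Hv. apply (weak_unit_pos_sub_nat_inf e u v Hunit Hu).
    intro n. apply Hv. exists n. reflexivity.
Qed.

End DedekindComplete.

(** * Order convergence through eventual bounds *)

Section OrderConvergence.
Context {X : riesz}.
Implicit Types (l v w z : X).

Definition eventual_bound (A : directed) (f : A -> X) l z : Prop :=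
  exists a0, forall a, dle A a0 a -> rabs (f a ⊖ l) ≼ z.

Lemma eventual_bound_ge0 (A : directed) (f : A -> X) l z : eventual_bound A f l z -> 0ᵣ ≼ z.
Proof. intros [a0 Hz]. eapply rle_trans; [apply abs_ge0 | apply (Hz a0), dle_refl]. Qed.

Definition eventual_bound_directed (A : directed) (f : A -> X) l z0
  (H0 : eventual_bound A f l z0) : directed.
Proof.
  refine (@Directed {z | eventual_bound A f l z} (fun p q => proj1_sig q ≼ proj1_sig p) _ _ _ _).
  - intros [z Hz]. apply rle_refl.
  - intros [z1 H1] [z2 H2] [z3 H3] H12 H23. simpl in *. eapply rle_trans; eauto.
  - exact (inhabits (exist _ z0 H0)).
  - intros [z1 [a1 H1]] [z2 [a2 H2]].
    assert (H12 : eventual_bound A f l (z1 ⊓ z2)).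
    { destruct (dup A a1 a2) as [a [Ha1 Ha2]]. exists a. intros b Hb.
      apply rinf_glb; [apply H1 | apply H2]; eapply dle_trans; eauto. }
    exists (exist _ _ H12). split; [apply rinf_lb1 | apply rinf_lb2].
Defined.

Lemma oconvP (A : directed) (f : A -> X) l :
  oconv A f l <-> (exists z, eventual_bound A f l z) /\ is_inf (eventual_bound A f l) 0ᵣ.
Proof.
  split.
  - intros [B [z [[_ [_ Hinf]] Hev]]]. destruct (dinh B) as [b0].
    split; [exists (z b0); apply Hev|]. split; [apply eventual_bound_ge0|].
    intros v Hv. apply Hinf. intros y [b ->]. apply Hv, Hev.
  - intros [[z0 H0] [_ Hinf]].
    exists (eventual_bound_directed A f l z0 H0), (@proj1_sig _ _). split; [split|].
    + intros [z1 H1] [z2 H2]. simpl. auto.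
    + split.
      * intros y [[z Hz] ->]. apply (eventual_bound_ge0 _ _ _ _ Hz).
      * intros v Hv. apply Hinf. intros z Hz. apply (Hv z). exists (exist _ z Hz). reflexivity.
    + intros [z [a0 Hz]]. exists a0. exact Hz.
Qed.

Lemma oconv0_le (A : directed) (f g : A -> X) : (forall a, 0ᵣ ≼ g a) -> (forall a, g a ≼ f a) ->
  oconv A f 0ᵣ -> oconv A g 0ᵣ.
Proof.
  intros Hg Hgf Hf. apply oconvP in Hf as [[z0 H0] [_ Hinf]].
  assert (Hev : forall z, eventual_bound A f 0ᵣ z -> eventual_bound A g 0ᵣ z).
  { intros z [a0 Hz]. exists a0. intros a Ha. rewrite subr0, abs_id by apply Hg.
    apply rle_trans with (f a); [apply Hgf|].
    apply rle_trans with (rabs (f a ⊖ 0ᵣ)); [rewrite subr0; apply le_abs | apply Hz, Ha]. }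
  apply oconvP. split; [exists z0; apply Hev, H0|]. split; [apply eventual_bound_ge0|].
  intros v Hv. apply Hinf. intros z Hz. apply Hv, Hev, Hz.
Qed.

Lemma oconv0_scale (A : directed) (f : A -> X) k :
  0 <= k -> oconv A f 0ᵣ -> oconv A (fun a => k ⊙ f a) 0ᵣ.
Proof.
  intros Hk Hf. apply oconvP in Hf as [[z0 H0] [_ Hinf]].
  assert (Hev : forall z,
    eventual_bound A f 0ᵣ z -> eventual_bound A (fun a => k ⊙ f a) 0ᵣ (k ⊙ z)).
  { intros z [a0 Hz]. exists a0. intros a Ha. rewrite subr0.
    apply rle_trans with (Rabs k ⊙ rabs (f a)); [apply abs_scale_le|].
    rewrite Rabs_right by lra. apply rle_scal; [exact Hk|].
    rewrite <- (subr0 (f a)). apply Hz, Ha. }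
  apply oconvP. split; [exists (k ⊙ z0); apply Hev, H0|]. split; [apply eventual_bound_ge0|].
  intros v Hv. destruct (Req_dec k 0) as [Hk0|Hk0].
  - rewrite <- (scale0r z0), <- Hk0. apply Hv, Hev, H0.
  - rewrite <- (scalerK k v) by exact Hk0. rewrite <- (scaler0 k). apply rle_scal; [exact Hk|].
    apply Hinf. intros z Hz. apply (ler_pscale2l k); [lra|].
    rewrite scalerK by exact Hk0. apply Hv, Hev, Hz.
Qed.

Lemma oconv0_inf_range (A : directed) (g : A -> X) : (forall a, 0ᵣ ≼ g a) -> oconv A g 0ᵣ ->
  is_inf (fun w => exists a, w = g a) 0ᵣ.
Proof.
  intros Hg Hconv. apply oconvP in Hconv as [_ [_ Hinf]]. split.
  - intros y [a ->]. apply Hg.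
  - intros v Hv. apply Hinf. intros z [a0 Hz].
    apply rle_trans with (g a0); [apply Hv; exists a0; reflexivity|].
    rewrite <- (abs_id (g a0)), <- (subr0 (g a0)) by apply Hg. apply Hz, dle_refl.
Qed.

Lemma decr_oconv0 (B : directed) (z : B -> X) : decr_to_zero X B z -> oconv B z 0ᵣ.
Proof.
  intros Hz. exists B, z. split; [exact Hz|]. intro b. exists b. intros b' Hb'.
  rewrite subr0, abs_id by (apply (proj1 (proj2 Hz)); exists b'; reflexivity).
  apply (proj1 Hz), Hb'.
Qed.

Lemma is_inf_add0 (S S' : X -> Prop) : is_inf S 0ᵣ -> is_inf S' 0ᵣ ->
  is_inf (fun w => exists s s', S s /\ S' s' /\ w = s ⊕ s') 0ᵣ.
Proof.
  intros [HS0 HS] [HS'0 HS']. split.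
  - intros w [s [s' [Hs [Hs' ->]]]]. apply addr_ge0; auto.
  - intros v Hv. apply HS'. intros s' Hs'. apply subr_le0, HS. intros s Hs.
    apply ler_subl_addr, Hv. exists s, s'. auto.
Qed.

(* If g is eventually below f ⊕ w with f → 0, then limsup g ≼ w; so g → 0 when such w
   can be taken with infimum 0. *)
Lemma oconv0_approx (A : directed) (g : A -> X) (W : X -> Prop) :
  (forall a, 0ᵣ ≼ g a) -> (exists w, W w) -> is_inf W 0ᵣ ->
  (forall w, W w -> exists f, oconv A f 0ᵣ /\ forall a, g a ≼ f a ⊕ w) ->
  oconv A g 0ᵣ.
Proof.
  intros Hg [w0 Hw0] [_ HW] Happrox.
  assert (Hev : forall f w z, (forall a, g a ≼ f a ⊕ w) ->
            eventual_bound A f 0ᵣ z -> eventual_bound A g 0ᵣ (z ⊕ w)).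
  { intros f w z Hgf [a0 Hz]. exists a0. intros a Ha.
    rewrite subr0, abs_id by apply Hg. eapply rle_trans; [apply Hgf|]. apply rle_add.
    apply rle_trans with (rabs (f a ⊖ 0ᵣ)); [rewrite subr0; apply le_abs | apply Hz, Ha]. }
  apply oconvP. split.
  - destruct (Happrox w0 Hw0) as [f0 [Hf0 Hgf0]].
    apply oconvP in Hf0 as [[z0 Hz0] _]. exists (z0 ⊕ w0). eapply Hev; eassumption.
  - split; [apply eventual_bound_ge0|]. intros v Hv. apply HW. intros w Hw.
    destruct (Happrox w Hw) as [f [Hf Hgf]]. apply oconvP in Hf as [_ [_ Hinf]].
    apply subr_le0, Hinf. intros z Hz. apply ler_subl_addr, Hv. eapply Hev; eassumption.
Qed.

End OrderConvergence.

(** * Positive operators *)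

Section PositiveOperator.
Context {X : riesz} (T : X -> X).
Hypothesis HX : dedekind_complete X.
Hypothesis T_linear : linear_op X T.
Hypothesis T_ge0 : forall x, 0ᵣ ≼ x -> 0ᵣ ≼ T x.

Lemma T_sub x y : T (x ⊖ y) = T x ⊖ T y.
Proof. unfold rsub. rewrite <- !scaleN1r, (proj1 T_linear), (proj2 T_linear). reflexivity. Qed.

Lemma T_le x y : x ≼ y -> T x ≼ T y.
Proof. intro H. apply subr_ge0. rewrite <- T_sub. apply T_ge0, subr_ge0, H. Qed.

Lemma oconv_cp_of_inf_unit (A : directed) (y : A -> X) e :
  0ᵣ ≼ e -> (forall a, 0ᵣ ≼ y a) -> oconv A (fun a => T (y a ⊓ e)) 0ᵣ ->
  forall eps, 0 < eps -> oconv A (fun a => T (P (rpos (y a ⊖ eps ⊙ e)) e)) 0ᵣ.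
Proof.
  intros He Hy Hconv eps Heps. set (c := Rmin eps 1).
  assert (Hc : 0 < c) by (apply Rmin_glb_lt; lra).
  apply oconv0_le with (fun a => / c ⊙ T (y a ⊓ e)).
  - intro a. apply T_ge0, P_bounds; auto using pos_ge0.
  - intro a. destruct (P_bounds HX (rpos (y a ⊖ eps ⊙ e)) e (pos_ge0 _) He) as [Hp Hpe].
    rewrite <- (proj2 T_linear). apply T_le, (ler_pscale2l c); [exact Hc|].
    rewrite scalerK by lra. apply rinf_glb.
    + eapply rle_trans; [|apply (scale_P_le HX (y a) e eps); auto].
      apply ler_scale2r; [apply Rmin_l | exact Hp].
    + eapply rle_trans; [apply ler_scale2r; [apply (Rmin_r eps 1) | exact Hp]|].
      rewrite rscal1. exact Hpe.
  - apply oconv0_scale; [left; apply Rinv_0_lt_compat, Hc | exact Hconv].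
Qed.

Hypothesis T_cont : order_continuous X T.

Lemma oconv_inf_of_cp (A : directed) (y : A -> X) e : weak_unit X e -> (forall a, 0ᵣ ≼ y a) ->
  (forall eps, 0 < eps -> oconv A (fun a => T (P (rpos (y a ⊖ eps ⊙ e)) e)) 0ᵣ) ->
  forall u, 0ᵣ ≼ u -> oconv A (fun a => T (y a ⊓ u)) 0ᵣ.
Proof.
  intros Hunit Hy Hcp u Hu. assert (He := proj1 Hunit).
  set (d := fun n : nat_directed => rpos (u ⊖ INR n ⊙ e)).
  assert (HTd : is_inf (fun w => exists n, w = T (d n)) 0ᵣ).
  { apply (oconv0_inf_range nat_directed (fun n => T (d n))).
    - intro n. apply T_ge0, pos_ge0.
    - apply T_cont, decr_oconv0, (weak_unit_pos_sub_nat_decr HX e u Hunit Hu). }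
  apply oconv0_approx with
    (fun w => exists s s', (exists n, s = T (d n)) /\
                         (exists eps, 0 < eps /\ s' = eps ⊙ T e) /\ w = s ⊕ s').
  - intro a. apply T_ge0, inf_ge0; auto.
  - exists (T (d 0%nat) ⊕ 1 ⊙ T e), (T (d 0%nat)), (1 ⊙ T e).
    split; [exists 0%nat; reflexivity|].
    split; [exists 1; split; [lra | reflexivity] | reflexivity].
  - apply is_inf_add0; [exact HTd | apply (is_inf_pos_scale0 HX), T_ge0, He].
  - intros w [s [s' [[n ->] [[eps [Heps ->]] ->]]]].
    exists (fun a => INR n ⊙ T (P (rpos (y a ⊖ eps ⊙ e)) e)). split.
    + apply oconv0_scale; [apply pos_INR | apply Hcp, Heps].
    + intro a. rewrite raddA, <- !(proj2 T_linear), <- !(proj1 T_linear).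
      apply T_le, inf_le_P_split; auto.
Qed.

End PositiveOperator.

Theorem mainTheorem9 (X : riesz) (e : X) (T : X -> X)
  (HX : dedekind_complete X) (He : weak_unit X e) (HT : cond_exp T e)
  (A : directed) (x : A -> X) (l : X) :
  (cp_conv T e A x l <->
     (forall u : X, rle X rzero u ->
        oconv A (fun a => T (rinf X (rabs (rsub (x a) l)) u)) rzero)) /\
  ((forall u : X, rle X rzero u ->
        oconv A (fun a => T (rinf X (rabs (rsub (x a) l)) u)) rzero) <->
     oconv A (fun a => T (rinf X (rabs (rsub (x a) l)) e)) rzero).
Proof.
  destruct HT as [Hlin [[Hpos _] [Hcont _]]]. assert (He0 := proj1 He).
  assert (Hy : forall a, 0ᵣ ≼ rabs (x a ⊖ l)) by (intro; apply abs_ge0).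
  pose proof (oconv_inf_of_cp T HX Hlin Hpos Hcont A _ e He Hy) as i_ii.
  pose proof (oconv_cp_of_inf_unit T HX Hlin Hpos A _ e He0 Hy) as iii_i.
  unfold cp_conv. split; split; intro H.
  - apply i_ii, H.
  - apply iii_i, H, He0.
  - apply H, He0.
  - apply i_ii, iii_i, H.
Qed.
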